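(* Let $X_1, X_2, \dots$ be i.i.d. $N(\mu, \sigma^2)$ with $\sigma^2>0$, and for $j\ge1$ let $\bar X_j = \frac1j\sum_{t=1}^j X_t$ and $S(j) = \sqrt{\frac1j\sum_{t=1}^j (X_t - \bar X_j)^2}$. Then for every $\epsilon > 0$, $$\frac{ \mathbb{P}\left( \bar X_j + S(j)\sqrt{k^{2/j} - 1} < \mu - \epsilon \text{ for some } 2 \leq j \leq k \right) }{ 1/k } \to \infty \quad \text{as } k \to \infty.$$ In particular, the probability on the left is not $o(1/k)$. *)

From HB Require Import structures.
From mathcomp Require Import all_boot all_order all_algebra.
From mathcomp Require Import all_classical all_reals all_analysis.
Set Implicit Arguments. Unset Strict Implicit. Unset Printing Implicit Defensive.
Import Order.TTheory GRing.Theory Num.Theory.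
Import numFieldNormedType.Exports.
Local Open Scope classical_set_scope.
Local Open Scope ring_scope.

Definition mutually_independent {R : realType} {d : measure_display}
  {T : measurableType d} (P : probability T R) (X : nat -> {RV P >-> R}) :=
  forall (s : seq nat) (A : nat -> set R), uniq s ->
    (forall i, measurable (A i)) ->
    P (\bigcap_(i in [set` s]) (X i @^-1` A i)) =
    (\prod_(i <- s) P (X i @^-1` A i))%E.

(* X_i ~ N(mu, sigma^2), sigma the standard deviation *)
Definition has_normal_law {R : realType} {d : measure_display}
  {T : measurableType d} (P : probability T R) (Y : {RV P >-> R}) (mu sigma : R) :=
  forall A : set R, measurable A -> P (Y @^-1` A) = normal_prob mu sigma A.

(* Indexing: X 0, X 1, ... stand for the paper's X_1, X_2, ...
   sample_mean X j x = (1/j) sum_{t=1}^j X_t(x) *)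
Definition sample_mean {R : realType} {d : measure_display}
  {T : measurableType d} (P : probability T R) (X : nat -> {RV P >-> R})
  (j : nat) (x : T) : R :=
  (j%:R)^-1 * \sum_(t < j) X t x.

Definition sample_sd {R : realType} {d : measure_display}
  {T : measurableType d} (P : probability T R) (X : nat -> {RV P >-> R})
  (j : nat) (x : T) : R :=
  Num.sqrt ((j%:R)^-1 * \sum_(t < j) (X t x - sample_mean X j x) ^+ 2).

From HB Require Import structures.
From mathcomp Require Import all_boot all_order all_algebra.
From mathcomp Require Import all_classical all_reals all_analysis.
From mathcomp Require Import ring lra.
Set Implicit Arguments. Unset Strict Implicit. Unset Printing Implicit Defensive.
Import Order.TTheory GRing.Theory Num.Theory.
Import numFieldNormedType.Exports.
Local Open Scope classical_set_scope.
Local Open Scope ring_scope.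

(* Already the index j = 2 undershoots often enough. For j = 2 it equals the
   midpoint of X_1, X_2 plus half their distance times sqrt(k - 1). Cut
   [t - 2, t - 1], t = mu - eps, into N ~ sqrt k windows of width 1/N: whenever
   X_1 and X_2 land in the same window the index is below t. These N events are
   disjoint and, by independence and since the normal density is bounded below
   on [t - 2, t - 1], each has probability of order 1/N^2. Hence the
   probability is of order 1/sqrt k, and k times it grows like sqrt k. *)

Lemma normal_prob_itv_ge (R : realType) (m s u v B : R) : s != 0 -> u <= v ->
  (forall x, u <= x <= v -> `|x - m| <= B) ->
  ((normal_peak s * expR (- B ^+ 2 / (s ^+ 2 *+ 2)) * (v - u))%:E
     <= normal_prob m s `[u, v[)%E.
Proof.
move=> s0 uv xB; set c := normal_peak s * _.
have -> : (c * (v - u))%:E = (\int[lebesgue_measure]_(x in `[u, v[) (cst c%:E) x)%E.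
  rewrite integral_cst //= lebesgue_measure_itv /=.
  have [{}uv|vu] := ltP u v; first by rewrite lte_fin uv -EFinD -EFinM.
  have -> : v = u by apply/eqP; rewrite eq_le uv vu.
  by rewrite subrr mulr0 ltxx mule0.
apply: ge0_le_integral => //.
- by move=> x _; rewrite lee_fin mulr_ge0 ?normal_peak_ge0 ?expR_ge0.
- apply/measurable_realfun.measurable_EFinP; apply: measurable_funTS.
  exact: measurable_normal_pdf.
- move=> x /=; rewrite in_itv /= => /andP[ux xv].
  rewrite lee_fin /normal_pdf (negbTE s0) /c ler_wpM2l ?normal_peak_ge0 //.
  rewrite /normal_fun ler_expR !mulNr lerN2 ler_wpM2r ?invr_ge0 ?mulrn_wge0 ?sqr_ge0 //.
  have := xB x; rewrite ux (ltW xv) => /(_ isT) xmB.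
  by rewrite -[(x - m) ^+ 2]real_normK ?num_real // ler_sqr ?nnegrE ?(le_trans _ xmB).
Qed.

Lemma measure_ge_disjoint_pieces (R : realType) (d : measure_display)
    (T : measurableType d) (mu : {measure set T -> \bar R}) (n : nat)
    (B : 'I_n -> set T) (E : set T) (a : R) :
  (forall i, measurable (B i)) -> trivIset setT B -> measurable E ->
  (forall i, B i `<=` E) -> (forall i, a%:E <= mu (B i))%E ->
  ((n%:R * a)%:E <= mu E)%E.
Proof.
move=> mB tB mE BE aB.
have mU : measurable (\big[setU/set0]_(i < n) B i) by exact: bigsetU_measurable.
apply: (@le_trans _ _ (mu (\big[setU/set0]_(i < n) B i))); last first.
  apply: le_measure; rewrite ?inE //.
  elim/big_ind: _ => [|C D CE DE|i _]; [exact: sub0set | | exact: BE].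
  by move=> x [/CE|/DE].
rewrite measure_semi_additive_ord // mulr_natl -[n in a *+ n]card_ord -sumr_const -sumEFin.
by apply: lee_sum => i _; exact: aB.
Qed.

Lemma itv_grid_index_unique (R : realFieldType) (a δ x : R) (i j : nat) :
  0 < δ -> x \in `[a + i%:R * δ, a + i.+1%:R * δ[ ->
  x \in `[a + j%:R * δ, a + j.+1%:R * δ[ -> i = j.
Proof.
rewrite !in_itv /= => δ_gt0 /andP[xi ix] /andP[xj jx].
have : i%:R * δ < j.+1%:R * δ by lra.
have : j%:R * δ < i.+1%:R * δ by lra.
rewrite !ltr_pM2r // !ltr_nat !ltnS => ji ij.
by apply/eqP; rewrite eqn_leq ij ji.
Qed.

Section sample_statistics.
Context (R : realType) (d : measure_display) (T : measurableType d)
  (P : probability T R) (X : nat -> {RV P >-> R}).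

Lemma measurable_sample_mean j : measurable_fun setT (sample_mean X j).
Proof. by apply: measurable_realfun.measurable_funM => //; exact: measurable_sum. Qed.

Lemma measurable_sample_sd j : measurable_fun setT (sample_sd X j).
Proof.
apply: measurableT_comp.
  exact: measurable_realfun.continuous_measurable_fun (@sqrt_continuous R).
apply: measurable_realfun.measurable_funM => //; apply: measurable_sum => t.
apply/measurable_realfun.measurable_funX/measurable_realfun.measurable_funB => //.
exact: measurable_sample_mean.
Qed.

Lemma sample_mean2 x : sample_mean X 2 x = (X 0%N x + X 1%N x) / 2.
Proof. by rewrite /sample_mean !big_ord_recr big_ord0 /= add0r mulrC. Qed.

Lemma sample_sd2 x : sample_sd X 2 x = `|X 0%N x - X 1%N x| / 2.
Proof.
rewrite /sample_sd sample_mean2 !big_ord_recr big_ord0 /= add0r.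
rewrite (_ : (2%:R)^-1 * _ = ((X 0%N x - X 1%N x) / 2) ^+ 2); last by field.
by rewrite sqrtr_sqr normrM normfV (@ger0_norm _ 2).
Qed.

Definition undershoot (k : nat) (t : R) : set T :=
  [set x | exists j : nat, (2 <= j <= k)%N /\
     sample_mean X j x + sample_sd X j x * Num.sqrt (k%:R `^ (2 / j%:R) - 1) < t].

Lemma measurable_undershoot k t : measurable (undershoot k t).
Proof.
have -> : undershoot k t = \bigcup_(j in [set j | (2 <= j <= k)%N])
    [set x | sample_mean X j x + sample_sd X j x *
               Num.sqrt (k%:R `^ (2 / j%:R) - 1) < t].
  by apply/seteqP; split=> x [j]; [move=> [? ?]; exists j | exists j].
apply: bigcup_measurable => j _; rewrite -[X in measurable X]setTI.
apply: (measurable_realfun.measurable_fun_ltr _ (measurable_cst t)) => //.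
apply: measurable_realfun.measurable_funD; first exact: measurable_sample_mean.
by apply: measurable_realfun.measurable_funM => //; exact: measurable_sample_sd.
Qed.

Lemma undershoot_of_close_pair k t u v x : (2 <= k)%N ->
  (v - u) * Num.sqrt (k%:R - 1) <= 1 -> v + 2^-1 <= t ->
  u <= X 0%N x < v -> u <= X 1%N x < v -> undershoot k t x.
Proof.
move=> k2 uvk vt /andP[u0 v0] /andP[u1 v1].
exists 2%N; split; first by rewrite k2.
rewrite sample_mean2 sample_sd2 divff ?pnatr_eq0 // powRr1 ?ler0n //.
have sk_ge0 := sqrtr_ge0 (k%:R - 1 : R).
have dist_le : `|X 0%N x - X 1%N x| <= v - u by rewrite ler_norml; apply/andP; split; lra.
have := le_trans (ler_wpM2r sk_ge0 dist_le) uvk.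
lra.
Qed.

Lemma mutually_independent_pair i j (A B : set R) : mutually_independent X ->
  i != j -> measurable A -> measurable B ->
  P (X i @^-1` A `&` X j @^-1` B) = (P (X i @^-1` A) * P (X j @^-1` B))%E.
Proof.
move=> indep ij mA mB.
have mAB n : measurable (if n == i then A else B) by case: ifP.
have uniq_ij : uniq [:: i; j] by rewrite /= inE ij.
have := indep _ _ uniq_ij mAB.
rewrite !big_cons big_nil mule1 eqxx eq_sym (negbTE ij) => <-; congr (P _).
apply/seteqP; split=> x /=.
  move=> [Ax Bx] n /=; rewrite !inE => /orP[] /eqP->; first by rewrite eqxx.
  by rewrite eq_sym (negbTE ij).
have j_in : j \in [:: i; j] by rewrite !inE eqxx orbT.
move=> h; split; first by have := h i (mem_head _ _); rewrite /= eqxx.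
by have := h j j_in; rewrite /= eq_sym (negbTE ij).
Qed.

End sample_statistics.

Section normal_sample.
Context (R : realType) (d : measure_display) (T : measurableType d)
  (P : probability T R) (X : nat -> {RV P >-> R}) (mu sigma : R).
Hypotheses (sigma_gt0 : 0 < sigma) (indepX : mutually_independent X)
  (normalX : forall n, has_normal_law (X n) mu sigma).

Lemma pair_in_itv_prob_ge (u v B : R) : u <= v ->
  (forall x, u <= x <= v -> `|x - mu| <= B) ->
  ((((normal_peak sigma * expR (- B ^+ 2 / (sigma ^+ 2 *+ 2))) * (v - u)) ^+ 2)%:E
    <= P (X 0%N @^-1` `[u, v[ `&` X 1%N @^-1` `[u, v[))%E.
Proof.
move=> uv xB.
rewrite (mutually_independent_pair indepX (i := 0%N) (j := 1%N)) //.
rewrite !normalX // expr2 EFinM.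
have I_ge := normal_prob_itv_ge (lt0r_neq0 sigma_gt0) uv xB.
by apply: lee_pmul => //; rewrite lee_fin ?mulr_ge0 ?normal_peak_ge0 ?expR_ge0 ?subr_ge0.
Qed.

Lemma undershoot_prob_ge (t : R) : exists2 c : R, 0 < c & forall k, (2 <= k)%N ->
  ((c / (Num.truncn (Num.sqrt (k%:R : R))).+1%:R)%:E <= P (undershoot X k t))%E.
Proof.
pose c := normal_peak sigma * expR (- (`|t - mu| + 2) ^+ 2 / (sigma ^+ 2 *+ 2)).
have c_gt0 : 0 < c by rewrite mulr_gt0 ?expR_gt0 ?normal_peak_gt0 ?gt_eqF.
exists (c ^+ 2); first exact: exprn_gt0.
move=> k k2; set N := (Num.truncn _).+1.
have N_gt0 : 0 < N%:R :> R by rewrite ltr0n.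
pose δ : R := N%:R^-1.
have δ_gt0 : 0 < δ by rewrite invr_gt0.
have Nδ : N%:R * δ = 1 by rewrite mulfV ?gt_eqF.
pose a := t - 2.
pose I (i : nat) := `[a + i%:R * δ, a + i.+1%:R * δ[.
have I_width i : (a + i.+1%:R * δ) - (a + i%:R * δ) = δ by rewrite -natr1; ring.
have I_sub (i : 'I_N) : a <= a + i%:R * δ /\ a + i.+1%:R * δ <= a + 1.
  split; first by rewrite lerDl mulr_ge0 // ltW.
  by rewrite lerD2l -[leRHS]Nδ ler_wpM2r ?(ltW δ_gt0) // ler_nat.
pose B (i : 'I_N) := X 0%N @^-1` [set` I i] `&` X 1%N @^-1` [set` I i].
have -> : c ^+ 2 / N%:R = N%:R * (c * δ) ^+ 2 by rewrite /δ; field; rewrite gt_eqF.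
apply: (measure_ge_disjoint_pieces (B := B)).
- by move=> i; apply: measurableI; apply: measurable_funPTI; exact: measurable_itv.
- move=> i j _ _ [x [[/= x0i _] [/= x0j _]]].
  by apply/val_inj; exact: itv_grid_index_unique δ_gt0 x0i x0j.
- exact: measurable_undershoot.
- move=> i x [/= x0 x1]; have [_ Ia] := I_sub i.
  apply: (undershoot_of_close_pair (u := a + i%:R * δ) (v := a + i.+1%:R * δ)) => //.
  + rewrite I_width -[leRHS]Nδ [leLHS]mulrC ler_wpM2r ?(ltW δ_gt0) //.
    apply: (le_trans _ (ltW (truncnS_gt (Num.sqrt (k%:R : R))))).
    by rewrite ler_sqrt ?ler0n // lerBlDr lerDl.
  + rewrite /a in Ia *; lra.
- move=> i; rewrite -(I_width i); apply: pair_in_itv_prob_ge.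
    by rewrite -subr_ge0 I_width ltW.
  move=> x /andP[ux xv]; have [aI Ia] := I_sub i; have aE : a = t - 2 by [].
  have := ler_norm (t - mu); have := ler_norm (mu - t); rewrite distrC.
  by rewrite ler_norml => ? ?; apply/andP; split; lra.
Qed.

End normal_sample.

Lemma mulr_nat_div_truncn_sqrt_cvgy (R : realType) (c : R) : 0 < c ->
  (fun k : nat => k%:R * (c / (Num.truncn (Num.sqrt (k%:R : R))).+1%:R)) @ \oo --> +oo.
Proof.
move=> c_gt0; apply/cvgryPge => A; near=> k.
have k_ge1 : (1 <= k)%N by near: k; exact: nbhs_infty_ge.
have kA : (2 * `|A| / c) ^+ 2 <= k%:R by near: k; exact: nbhs_infty_ger.
set q := Num.sqrt (k%:R : R); set N := (Num.truncn q).+1.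
have N_gt0 : 0 < N%:R :> R by rewrite ltr0n.
have N_le : N%:R <= q + 1 by rewrite /N -natr1 lerD2r truncn_le sqrtr_ge0.
have q_ge1 : 1 <= q by rewrite -sqrtr1 ler_sqrt ?ler1n.
have kq : k%:R = q ^+ 2 by rewrite sqr_sqrtr ?ler0n.
have Aq : 2 * `|A| / c <= q.
  have A_ge0 : 0 <= 2 * `|A| / c by rewrite divr_ge0 ?mulr_ge0 ?normr_ge0 ?ltW.
  by rewrite -(ger0_norm A_ge0) -sqrtr_sqr /q ler_sqrt ?ler0n.
have cAq : 2 * `|A| <= c * q by rewrite -ler_pdivrMl // mulrC.
rewrite mulrA ler_pdivlMr // kq.
have := ler_norm A; have := normr_ge0 A; nra.
Unshelve. all: end_near.
Qed.

Theorem proposition2 (R : realType) (d : measure_display) (T : measurableType d)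
  (P : probability T R) (X : nat -> {RV P >-> R}) (mu sigma : R) :
  0 < sigma ->
  mutually_independent X ->
  (forall n, has_normal_law (X n) mu sigma) ->
  forall eps : R, 0 < eps ->
  ((fun k : nat =>
      (k%:R)%:E *
       (P [set x | exists j : nat, (2 <= j <= k)%N /\
            (sample_mean X j x + sample_sd X j x *
              Num.sqrt ((k%:R) `^ (2 / j%:R) - 1) < mu - eps)%R]))%E
   @ \oo --> +oo%E).
Proof.
(* The lower bound holds for every threshold. *)
move=> sigma_gt0 indepX normalX eps _.
have [c c_gt0 P_ge] := undershoot_prob_ge sigma_gt0 indepX normalX (mu - eps).
apply: (@gee_cvgy _ _ _ _
  (fun k : nat => (k%:R * (c / (Num.truncn (Num.sqrt (k%:R : R))).+1%:R))%:E)).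
  near=> k; rewrite EFinM; apply: lee_pmul => //; rewrite ?lee_fin ?divr_ge0 ?(ltW c_gt0) //.
  by apply: P_ge; near: k; exact: nbhs_infty_ge.
exact/cvgeryP/mulr_nat_div_truncn_sqrt_cvgy.
Unshelve. all: end_near.
Qed.
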